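(* Let $G$ be a finite group such that, for some prime $p$, the center $Z(G)$ is a nontrivial $p$-group and, for every element $x\in G$ of order $p$, the centralizer $C_G(x)$ is not a $p$-group. Then the cyclic graph $\Delta(G)$ is connected and $\mathrm{diam}(\Delta(G))\le 6$.
   Context: For a finite group $G$, the cyclic graph $\Delta(G)$ has vertex set $G^{\#}=G\setminus\{1\}$, and distinct vertices $x,y$ are adjacent if and only if the subgroup $\langle x,y\rangle$ is cyclic. The diameter is the maximum graph distance between two vertices. *)

From mathcomp Require Import all_boot all_fingroup all_solvable pgroup center cyclic.
Set Implicit Arguments. Unset Strict Implicit. Unset Printing Implicit Defensive.
Local Open Scope group_scope.

Definition cyc_adj (gT : finGroupType) (G : {set gT}) : rel gT :=
  fun x y => [&& x \in G^#, y \in G^#, x != y & cyclic <<[set x; y]>>].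

Definition cyc_dist_le (gT : finGroupType) (G : {set gT}) (n : nat) (x y : gT) :=
  exists2 s : seq gT, path (cyc_adj G) x s && (last x s == y) & size s <= n.

Definition cyc_connected (gT : finGroupType) (G : {set gT}) :=
  forall x y, x \in G^# -> y \in G^# -> connect (cyc_adj G) x y.

Definition cyc_diam_le (gT : finGroupType) (G : {set gT}) (n : nat) :=
  forall x y, x \in G^# -> y \in G^# -> cyc_dist_le G n x y.

From mathcomp Require Import all_boot all_fingroup all_solvable pgroup center cyclic.
Set Implicit Arguments. Unset Strict Implicit. Unset Printing Implicit Defensive.
Local Open Scope group_scope.

(* Fix a central element z of order p.  Every vertex x has a power y of prime
   order q.  If q <> p, then y and z commute and have coprime orders, so y ~ z.
   If q = p, then C_G(y) is not a p-group and contains an element w of prime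
   order r <> p, and y ~ w ~ z for the same reason.  Hence every vertex is at
   distance at most 3 from z, and any two vertices are at distance at most 6. *)

Section CyclicGraphDistance.
Variables (gT : finGroupType) (G : {set gT}).

Lemma cyc_adj_sym : symmetric (cyc_adj G).
Proof.
by move=> x y; rewrite /cyc_adj andbCA (eq_sym x) setUC.
Qed.

Lemma cyc_dist_le_refl n x : cyc_dist_le G n x x.
Proof. by exists [::]; rewrite /= ?eqxx. Qed.

Lemma cyc_dist_leW m n x y : m <= n -> cyc_dist_le G m x y -> cyc_dist_le G n x y.
Proof. by move=> le_mn [s xPy le_sm]; exists s; last exact: leq_trans le_mn. Qed.

Lemma cyc_dist_le1 x y :
  x \in G^# -> y \in G^# -> cyclic <<[set x; y]>> -> cyc_dist_le G 1 x y.
Proof.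
move=> xG yG cyc_xy; have [<-|neq_xy] := eqVneq x y; first exact: cyc_dist_le_refl.
by exists [:: y]; rewrite //= /cyc_adj xG yG neq_xy cyc_xy eqxx.
Qed.

Lemma cyc_dist_le_sym n x y : cyc_dist_le G n x y -> cyc_dist_le G n y x.
Proof.
case=> s /andP[xPs /eqP <-] le_sn; exists (rev (belast x s)); last first.
  by rewrite size_rev size_belast.
rewrite rev_path (eq_path (e' := cyc_adj G)) ?xPs; last by move=> u v; apply: cyc_adj_sym.
by rewrite -(last_cons x) -rev_rcons -lastI rev_cons last_rcons eqxx.
Qed.

Lemma cyc_dist_le_trans m n x y z :
  cyc_dist_le G m x y -> cyc_dist_le G n y z -> cyc_dist_le G (m + n) x z.
Proof.
case=> s /andP[xPs /eqP xy] le_sm [t /andP[yPt /eqP yz] le_tn].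
exists (s ++ t); last by rewrite size_cat leq_add.
by rewrite cat_path last_cat xy xPs yPt yz /=.
Qed.

Lemma cyc_diam_le_connected n : cyc_diam_le G n -> cyc_connected G.
Proof.
move=> diamG x y xG yG; have [s /andP[xPs /eqP <-] _] := diamG x y xG yG.
by apply/connectP; exists s.
Qed.

End CyclicGraphDistance.

Section CommutingElementsOfPrimeOrder.
Variable gT : finGroupType.

Lemma cyclic_gen_cycle (x y : gT) : y \in <[x]> -> cyclic <<[set x; y]>>.
Proof.
move=> y_x; apply: cyclicS (cycle_cyclic x).
by rewrite gen_subG subUset !sub1set cycle_id.
Qed.

Lemma cyclic_gen_coprime (a b : gT) :
  commute a b -> coprime #[a] #[b] -> cyclic <<[set a; b]>>.
Proof.
move=> cab co_ab; apply: cyclicS (cycle_cyclic (a * b)).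
rewrite gen_subG subUset !sub1set /= cycleM //.
by rewrite -{1}[a]mulg1 -{2}[b]mul1g !mem_mulg ?cycle_id.
Qed.

Lemma prime_order_neq1 (x : gT) : prime #[x] -> x != 1.
Proof. by move/prime_gt1; rewrite order_gt1. Qed.

Lemma cyc_dist_le1_distinct_primes (G : {set gT}) (u v : gT) :
  u \in G -> v \in G -> commute u v ->
  prime #[u] -> prime #[v] -> #[u] != #[v] -> cyc_dist_le G 1 u v.
Proof.
move=> uG vG cuv pr_u pr_v neq_uv.
apply: cyc_dist_le1; rewrite ?inE ?uG ?vG ?prime_order_neq1 //.
by apply: cyclic_gen_coprime; rewrite // prime_coprime // dvdn_prime2.
Qed.

Lemma not_pgroup_prime_order_elt (p : nat) (H : {group gT}) :
  ~~ p.-group H -> exists2 w, w \in H & prime #[w] && (#[w] != p).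
Proof.
rewrite /pgroup /pnat cardG_gt0 => /allPn[r]; rewrite mem_primes inE.
case/and3P=> pr_r _ r_dv_H neq_rp; have [w wH ow] := Cauchy pr_r r_dv_H.
by exists w; rewrite // ow pr_r.
Qed.

End CommutingElementsOfPrimeOrder.

Section CentralElementOfPrimeOrder.
Variables (gT : finGroupType) (G : {group gT}) (p : nat) (z : gT).
Hypotheses (pr_p : prime p) (zZ : z \in 'Z(G)) (oz : #[z] = p).
Hypothesis not_pgroup_cent1 : forall x, x \in G -> #[x] = p -> ~~ p.-group 'C_G[x].

Lemma cyc_dist_le_central x : x \in G^# -> cyc_dist_le G 3 x z.
Proof.
case/setD1P=> ntx xG; have /centerP[zG cGz] := zZ.
have commute_z u : u \in G -> commute u z by move=> uG; apply/esym/cGz.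
have pr_q : prime (pdiv #[x]) by rewrite pdiv_prime // order_gt1.
have [y y_x oy] := Cauchy pr_q (pdiv_dvd #[x]).
have yG : y \in G by apply: subsetP y_x; rewrite cycle_subG.
have pr_y : prime #[y] by rewrite oy.
have xy : cyc_dist_le G 1 x y.
  by apply: cyc_dist_le1; rewrite ?inE ?ntx ?xG ?yG ?prime_order_neq1 ?cyclic_gen_cycle.
have [oy_p | oy_np] := eqVneq #[y] p.
  have [w /setIP[wG /cent1P cyw] /andP[pr_w ow_np]] :=
    not_pgroup_prime_order_elt (not_pgroup_cent1 yG oy_p).
  apply: (@cyc_dist_le_trans _ _ 2 1 _ w).
    apply: (@cyc_dist_le_trans _ _ 1 1 _ y) => //.
    by apply: cyc_dist_le1_distinct_primes; rewrite // oy_p eq_sym.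
  by apply: (cyc_dist_le1_distinct_primes wG zG (commute_z w wG)); rewrite ?oz.
apply: (@cyc_dist_leW _ _ 2) => //; apply: (@cyc_dist_le_trans _ _ 1 1 _ y) => //.
by apply: (cyc_dist_le1_distinct_primes yG zG (commute_z y yG)); rewrite ?oz.
Qed.

End CentralElementOfPrimeOrder.

Theorem lemma3p2 (gT : finGroupType) (G : {group gT}) (p : nat) :
  prime p ->
  p.-group 'Z(G) -> 'Z(G) != 1 ->
  (forall x, x \in G -> #[x]%N = p -> ~~ p.-group 'C_G[x]) ->
  cyc_connected G /\ cyc_diam_le G 6.
Proof.
move=> pr_p pZ ntZ not_pgroup_cent1.
have [_ p_dv_Z _] := pgroup_pdiv pZ ntZ.
have [z zZ oz] := Cauchy pr_p p_dv_Z.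
have central := cyc_dist_le_central pr_p zZ oz not_pgroup_cent1.
have diamG : cyc_diam_le G 6.
  move=> x y xG yG; apply: (@cyc_dist_le_trans _ _ 3 3 _ z); first exact: central.
  exact/cyc_dist_le_sym/central.
by split; first exact: cyc_diam_le_connected diamG.
Qed.
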